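(* Let $f:\mathbb{R}^d\to\mathbb{R}$ be convex and $L$-smooth with a minimizer $x^\star$, and let $x_0\in\mathbb{R}^d$ satisfy $f(x_0)-f(x^\star)\le\Delta_0$. Fix an integer $N\ge1$, let $\theta_N=1$ and, for $k=N-1,\dots,0$, let $\theta_k>0$ satisfy $\theta_k^2-\theta_k=\theta_{k+1}^2$. Let $v_0=\mathbf{0}$ and for $k=0,\dots,N-1$, $$v_{k+1}=v_k+\frac{1}{L\theta_k\theta_{k+1}^2}\nabla f(x_k),\qquad x_{k+1}=x_k-\frac{1}{L}\nabla f(x_k)-(2\theta_{k+1}^3-\theta_{k+1}^2)v_{k+1}.$$ Then the output satisfies $\|\nabla f(x_N)\|^2\le\dfrac{8L\Delta_0}{(N+2)^2}$.
   Context: $L$-smooth means $\|\nabla f(x)-\nabla f(y)\|\le L\|x-y\|$ for all $x,y$; $\|\cdot\|$ is the Euclidean norm. *)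

From HB Require Import structures.
From mathcomp Require Import all_boot all_order all_algebra.
From mathcomp Require Import all_classical all_reals all_analysis.
Set Implicit Arguments. Unset Strict Implicit. Unset Printing Implicit Defensive.
Import Order.TTheory GRing.Theory Num.Theory.
Import numFieldNormedType.Exports.
Local Open Scope ring_scope.

(* Euclidean inner product and Euclidean norm on R^d (the library norm on
   'rV is the max norm, so we define the Euclidean one explicitly). *)
Definition dotv {R : realType} {d : nat} (u v : 'rV[R]_d) : R :=
  \sum_(i < d) u ord0 i * v ord0 i.

Definition enorm {R : realType} {d : nat} (u : 'rV[R]_d) : R :=
  Num.sqrt (dotv u u).

Definition is_gradient {R : realType} {d : nat}
  (f : 'rV[R]_d -> R) (g : 'rV[R]_d -> 'rV[R]_d) : Prop :=
  forall x, differentiable f x /\ forall v, ('d f x : 'rV[R]_d -> R) v = dotv (g x) v.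

Definition convex_fun {R : realType} {d : nat} (f : 'rV[R]_d -> R) : Prop :=
  forall (x y : 'rV[R]_d) (t : R), 0 <= t -> t <= 1 ->
    f (t *: x + (1 - t) *: y) <= t * f x + (1 - t) * f y.

Definition L_smooth {R : realType} {d : nat} (L : R) (g : 'rV[R]_d -> 'rV[R]_d) : Prop :=
  forall x y, enorm (g x - g y) <= L * enorm (x - y).

From HB Require Import structures.
From mathcomp Require Import all_boot all_order all_algebra.
From mathcomp Require Import all_classical all_reals all_analysis.
From mathcomp Require Import ring lra.
Import Order.TTheory GRing.Theory Num.Theory.
Import numFieldNormedType.Exports.
Local Open Scope ring_scope.

(* A Lyapunov argument run backwards from the last iterate.  There is a
   quadratic potential P_m in (theta_m, x_m, v_m, x_N) such that P_m - P_(m+1)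
   is a nonnegative combination of two instances of the inequality
     f x + <g x, y - x> + |g y - g x|^2 / (2L) <= f y,
   valid for convex L-smooth f, namely for the pairs (x_(m+1), x_m) and
   (x_m, x_N).  Since P_N = 0, this gives P_0 >= 0; as v_0 = 0, P_0 >= 0 reads
   2 theta_0^2 |g x_N|^2 <= 2L (f x_0 - f x_N) + |g x_0|^2 + |g x_N|^2
   <= 4 L Delta0, and the recursion for theta gives theta_0 >= (N + 2) / 2. *)

Section EuclideanInnerProduct.
Context {R : realType} {d : nat}.
Implicit Types u w z : 'rV[R]_d.

Lemma dotvC u w : dotv u w = dotv w u.
Proof. by apply: eq_bigr => i _; rewrite mulrC. Qed.

Lemma dotvDl u w z : dotv (u + w) z = dotv u z + dotv w z.
Proof. by rewrite /dotv -big_split; apply: eq_bigr => i _; rewrite !mxE mulrDl. Qed.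

Lemma dotvDr u w z : dotv z (u + w) = dotv z u + dotv z w.
Proof. by rewrite dotvC dotvDl !(dotvC z). Qed.

Lemma dotvZl (c : R) u z : dotv (c *: u) z = c * dotv u z.
Proof. by rewrite /dotv mulr_sumr; apply: eq_bigr => i _; rewrite !mxE mulrA. Qed.

Lemma dotvZr (c : R) u z : dotv z (c *: u) = c * dotv z u.
Proof. by rewrite dotvC dotvZl dotvC. Qed.

Lemma dotvNl u z : dotv (- u) z = - dotv u z.
Proof. by rewrite -scaleN1r dotvZl mulN1r. Qed.

Lemma dotvNr u z : dotv z (- u) = - dotv z u.
Proof. by rewrite dotvC dotvNl dotvC. Qed.

Lemma dotv0l z : dotv 0 z = 0.
Proof. by rewrite -(scale0r (0 : 'rV[R]_d)) dotvZl mul0r. Qed.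

Lemma dotv0r z : dotv z 0 = 0.
Proof. by rewrite dotvC dotv0l. Qed.

Lemma dotvv_ge0 u : 0 <= dotv u u.
Proof. by apply: sumr_ge0 => i _; rewrite -expr2 sqr_ge0. Qed.

Lemma sqr_enorm u : enorm u ^+ 2 = dotv u u.
Proof. by rewrite /enorm sqr_sqrtr // dotvv_ge0. Qed.

Lemma abs_dotv_le {M : R} {u w} :
  0 < M -> dotv w w <= M ^+ 2 * dotv u u -> `|dotv w u| <= M * dotv u u.
Proof.
move=> M_gt0 w_le.
have := dotvv_ge0 (w - M *: u); have := dotvv_ge0 (w + M *: u).
rewrite !(dotvDl, dotvDr, dotvNl, dotvNr, dotvZl, dotvZr) (dotvC u w) => ge0D ge0B.
by rewrite ler_norml; apply/andP; split; nra.
Qed.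

End EuclideanInnerProduct.

Lemma is_derive_quadratic (R : realType) (A B c : R) :
  is_derive c 1 (fun s : R => s * A + s ^+ 2 * B) (A + 2 * c * B).
Proof.
have -> : (fun s : R => s * A + s ^+ 2 * B) = A \*: id + B \*: (id * id).
  by apply/funext => s; rewrite !fctE /= mulrC expr2 [_ * B]mulrC.
apply: is_derive_eq; change (A * 1 + B * (c * 1 + c * 1) = A + 2 * c * B); ring.
Qed.

Lemma le0_of_le_small_mul (R : realFieldType) (a c : R) :
  (forall t, 0 < t -> t <= 1 -> a <= t * c) -> a <= 0.
Proof.
move=> a_le; rewrite leNgt; apply/negP => a_gt0.
have a_le_c : a <= c by rewrite -[c]mul1r a_le.
have c_gt0 : 0 < c := lt_le_trans a_gt0 a_le_c.
have t_le1 : a / (2 * c) <= 1.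
  by rewrite ler_pdivrMr ?mulr_gt0 // mul1r mulr_natl mulr2n (le_trans a_le_c) // lerDr ltW.
have := a_le _ _ t_le1; rewrite divr_gt0 ?mulr_gt0 // => /(_ isT).
have -> : a / (2 * c) * c = a / 2 by field; rewrite gt_eqF.
lra.
Qed.

Section SmoothFunction.
Context {R : realType} {d : nat} {f : 'rV[R]_d -> R} {g : 'rV[R]_d -> 'rV[R]_d} {L : R}.
Hypotheses (L_gt0 : 0 < L) (grad_g : is_gradient f g) (smooth_g : L_smooth L g).
Implicit Types x y u : 'rV[R]_d.

Lemma is_derive_line x u (t : R) :
  is_derive t 1 (fun s : R => f (s *: u + x)) (dotv (g (t *: u + x)) u).
Proof.
have [df dfE] := grad_g (t *: u + x).
have dline : is_diff t (fun s : R => s *: u + x) ( *:%R^~ u).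
  have -> : (fun s : R => s *: u + x) = *:%R^~ u + cst x by [].
  by apply: is_diff_eq; rewrite addr0.
have dF : differentiable (f \o (fun s : R => s *: u + x)) t.
  exact: differentiable_comp.
apply: DeriveDef; first exact/derivable1_diffP.
by rewrite deriveE // diff_comp // diff_val /= scale1r dfE.
Qed.

(* The mean value theorem for s |-> f (s u + x) - s <g x, u> - s^2 B. *)
Lemma mean_value_line x u (B : R) : exists2 c : R, 0 < c &
  f (u + x) - f x - dotv (g x) u - B = dotv (g (c *: u + x) - g x) u - 2 * c * B.
Proof.
pose phi := (fun s : R => f (s *: u + x)) - (fun s => s * dotv (g x) u + s ^+ 2 * B).
have dphi (c : R) :
    is_derive c 1 phi (dotv (g (c *: u + x)) u - (dotv (g x) u + 2 * c * B)).
  by apply: is_deriveB; [exact: is_derive_line | exact: is_derive_quadratic].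
have phi_cont := @derivable_within_continuous _ _ phi `[0, 1]
  (fun c _ => @ex_derive _ _ _ _ _ _ _ (dphi c)).
have [c /[!in_itv] /= /andP [c_gt0 _]] := MVT ltr01 (fun c _ => dphi c) phi_cont.
move=> E; exists c => //; rewrite dotvDl dotvNl.
have -> : f (u + x) - f x - dotv (g x) u - B = phi 1 - phi 0.
  by rewrite /phi !fctE scale1r scale0r add0r; ring.
by rewrite E; ring.
Qed.

Lemma dotv_grad_sub_le x u (c : R) : 0 < c ->
  `|dotv (g (c *: u + x) - g x) u| <= c * L * dotv u u.
Proof.
move=> c_gt0; set w := g (c *: u + x) - g x.
have w_le : dotv w w <= L ^+ 2 * dotv (c *: u) (c *: u).
  rewrite -!sqr_enorm -exprMn ler_pXn2r ?nnegrE ?sqrtr_ge0 //.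
    by have := smooth_g (c *: u + x) x; rewrite addrK.
  by rewrite mulr_ge0 ?sqrtr_ge0 // ltW.
have := abs_dotv_le L_gt0 w_le; rewrite !(dotvZl, dotvZr) normrM gtr0_norm //.
by rewrite mulrCA ler_pM2l // -mulrA mulrCA.
Qed.

Lemma smooth_upper_bound x u :
  f (u + x) <= f x + dotv (g x) u + L / 2 * dotv u u.
Proof.
have [c c_gt0 E] := mean_value_line x u (L / 2 * dotv u u).
have /[!ler_norml] /andP [_ W_le] := dotv_grad_sub_le x u c c_gt0.
rewrite -subr_le0 (_ : _ - _ = f (u + x) - f x - dotv (g x) u - L / 2 * dotv u u).
  by rewrite E; lra.
by ring.
Qed.

Lemma smooth_lower_bound x u :
  f x + dotv (g x) u - L / 2 * dotv u u <= f (u + x).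
Proof.
have [c c_gt0 E] := mean_value_line x u (- (L / 2 * dotv u u)).
have /[!ler_norml] /andP [W_ge _] := dotv_grad_sub_le x u c c_gt0.
rewrite -subr_ge0 (_ : _ - _ = f (u + x) - f x - dotv (g x) u - - (L / 2 * dotv u u)).
  by rewrite E; lra.
by ring.
Qed.

Lemma grad_sqr_le_gap xs y : (forall z, f xs <= f z) ->
  dotv (g y) (g y) <= 2 * L * (f y - f xs).
Proof.
move=> xs_min; have := le_trans (xs_min _) (smooth_upper_bound y (- (L^-1 *: g y))).
rewrite !(dotvNl, dotvNr, dotvZl, dotvZr) opprK; set G := dotv (g y) (g y).
have -> : L / 2 * (L^-1 * (L^-1 * G)) = G / (2 * L) by field; rewrite gt_eqF.
have -> : L^-1 * G = 2 * (G / (2 * L)) by field; rewrite gt_eqF.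
move=> le_gap; rewrite {1}(_ : G = 2 * L * (G / (2 * L))); last by field; rewrite gt_eqF.
by rewrite ler_pM2l ?mulr_gt0 //; lra.
Qed.

Hypothesis convex_f : convex_fun f.

Lemma convex_gradient_ineq x y : f x + dotv (g x) (y - x) <= f y.
Proof.
rewrite -subr_le0; apply: (@le0_of_le_small_mul _ _ (L / 2 * dotv (y - x) (y - x))).
move=> t t_gt0 t_le1; rewrite -(ler_pM2l t_gt0).
have := smooth_lower_bound x (t *: (y - x)).
have -> : t *: (y - x) + x = t *: y + (1 - t) *: x.
  by apply/rowP => i; rewrite !mxE; ring.
have := convex_f y x t (ltW t_gt0) t_le1.
by rewrite !(dotvZl, dotvZr); nra.
Qed.

Lemma convex_smooth_lower_bound x y :
  f x + dotv (g x) (y - x) + dotv (g y - g x) (g y - g x) / (2 * L) <= f y.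
Proof.
set w := g y - g x; set u := - (L^-1 *: w).
have gyu : dotv (g y) u = dotv (g x) u + dotv w u by rewrite /w dotvDl dotvNl; ring.
have wu : dotv w u = - (2 * (dotv w w / (2 * L))).
  by rewrite /u dotvNr dotvZr; congr (- _); field; rewrite gt_eqF.
have uu : L / 2 * dotv u u = dotv w w / (2 * L).
  by rewrite /u dotvNl dotvNr opprK dotvZl dotvZr; field; rewrite gt_eqF.
have lower := convex_gradient_ineq x (u + y).
have upper := smooth_upper_bound y u.
rewrite -addrA dotvDr in lower; rewrite gyu wu uu in upper.
lra.
Qed.

End SmoothFunction.

(* At iteration m of the method the arguments are t = theta_m, fm = f x_m,
   fN = f x_N, a = x_N - x_m, v = v_m, p = g x_m and h = g x_N. *)
Definition potential {R : realType} {d : nat} (L t fm fN : R) (a v p h : 'rV[R]_d) : R :=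
  L * (fm - fN) / (2 * t ^+ 2) + L ^+ 2 * dotv a v / 2
  + L ^+ 2 * (t ^+ 2 - t) ^+ 2 / 2 * dotv v v + L * (t - 1 / 2) * dotv v p
  - L * dotv v h / 2 + dotv p p / (4 * t ^+ 2)
  - (1 / 2 - 1 / (4 * t ^+ 2)) * dotv h h.

Section Potential.
Context {R : realType} {d : nat}.
Implicit Types (L t s fm fN : R) (a v p h : 'rV[R]_d).

Lemma potential_final L fN v h : potential L 1 fN fN 0 v h h = 0.
Proof. by rewrite /potential dotv0l; field. Qed.

Lemma potential_initial L t fm fN a p h : t != 0 ->
  potential L t fm fN a 0 p h =
    (2 * L * (fm - fN) + dotv p p - (2 * t ^+ 2 - 1) * dotv h h) / (4 * t ^+ 2).
Proof. by move=> t_neq0; rewrite /potential !dotv0l dotv0r; field. Qed.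

Lemma potential_step_identity {L t s fm fm1 fN a v p q h v' w} :
  0 < L -> 0 < t -> 0 < s -> t ^+ 2 - t = s ^+ 2 ->
  v' = v + (L * t * s ^+ 2)^-1 *: p ->
  w = L^-1 *: p + (2 * s ^+ 3 - s ^+ 2) *: v' ->
  potential L t fm fN a v p h =
    potential L s fm1 fN (a + w) v' q h
    + L / (2 * s ^+ 2) * (fm - fm1 - dotv q w - dotv (p - q) (p - q) / (2 * L))
    + L * (1 / (2 * s ^+ 2) - 1 / (2 * t ^+ 2))
      * (fN - fm - dotv p a - dotv (h - p) (h - p) / (2 * L)).
Proof.
move=> L_gt0 t_gt0 s_gt0 ts -> ->.
(* [r = s / t] rationally parametrizes the conic [t^2 - t = s^2], which makes
   the identity a rational identity in [r] that [field] can check. *)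
have [r [r_neq0 r2_neq1 -> ->]] : exists r : R,
    [/\ r != 0, 1 - r ^+ 2 != 0, t = 1 / (1 - r ^+ 2) & s = r / (1 - r ^+ 2)].
  have r2E : 1 - (s / t) ^+ 2 = t^-1.
    by rewrite expr_div_n -ts; field; rewrite gt_eqF.
  exists (s / t); rewrite r2E invr_eq0 !gt_eqF ?divr_gt0 //.
  by split; [| | rewrite div1r invrK | rewrite invrK divfK ?gt_eqF].
rewrite /potential !(dotvDl, dotvDr, dotvNl, dotvNr, dotvZl, dotvZr).
rewrite ?(dotvC v a) ?(dotvC p a) ?(dotvC q a) ?(dotvC h a) ?(dotvC p v) ?(dotvC q v)
  ?(dotvC h v) ?(dotvC q p) ?(dotvC h p) ?(dotvC h q).
field.
by rewrite r_neq0 r2_neq1 gt_eqF.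
Qed.

End Potential.

Section PotentialDescent.
Context {R : realType} {d : nat} {f : 'rV[R]_d -> R} {g : 'rV[R]_d -> 'rV[R]_d} {L : R}.
Hypotheses (L_gt0 : 0 < L) (grad_g : is_gradient f g) (smooth_g : L_smooth L g)
  (convex_f : convex_fun f).

Lemma potential_le_step {t s : R} {x x' xN v v' : 'rV[R]_d} :
  0 < t -> 0 < s -> t ^+ 2 - t = s ^+ 2 ->
  v' = v + (L * t * s ^+ 2)^-1 *: g x ->
  x' = x - L^-1 *: g x - (2 * s ^+ 3 - s ^+ 2) *: v' ->
  potential L s (f x') (f xN) (xN - x') v' (g x') (g xN)
    <= potential L t (f x) (f xN) (xN - x) v (g x) (g xN).
Proof.
move=> t_gt0 s_gt0 ts v'E x'E.
have stepE : x - x' = L^-1 *: g x + (2 * s ^+ 3 - s ^+ 2) *: v'.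
  by rewrite x'E; apply/rowP => i; rewrite !mxE; ring.
rewrite (potential_step_identity (fm1 := f x') (q := g x') L_gt0 t_gt0 s_gt0 ts v'E stepE).
rewrite (_ : xN - x + (x - x') = xN - x') ?subrKA //.
have weight_ge0 : 0 <= 1 / (2 * s ^+ 2) - 1 / (2 * t ^+ 2).
  rewrite (_ : _ - _ = 1 / (2 * t * s ^+ 2)) ?divr_ge0 ?mulr_ge0 ?ltW //.
  by rewrite -ts; field; rewrite ts !gt_eqF ?exprn_gt0.
rewrite -addrA lerDl; apply: addr_ge0; apply: mulr_ge0.
- by rewrite divr_ge0 ?mulr_ge0 ?exprn_ge0 // ltW.
- by have := convex_smooth_lower_bound L_gt0 grad_g smooth_g convex_f x' x; lra.
- exact: mulr_ge0 (ltW L_gt0) weight_ge0.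
- by have := convex_smooth_lower_bound L_gt0 grad_g smooth_g convex_f x xN; lra.
Qed.
End PotentialDescent.

Lemma nonincr_upto (R : realDomainType) (u : nat -> R) (N : nat) :
  (forall m, (m < N)%N -> u m.+1 <= u m) -> u N <= u 0%N.
Proof.
move=> u_step; suff : forall n, (n <= N)%N -> u n <= u 0%N by apply.
by elim=> // n IH n_lt; exact: le_trans (u_step n n_lt) (IH (ltnW n_lt)).
Qed.

Lemma add_half_le_of_sqr_sub {R : realFieldType} {a b : R} :
  0 < a -> 0 < b -> a ^+ 2 - a = b ^+ 2 -> b + 1 / 2 <= a.
Proof.
move=> a_gt0 b_gt0 ab.
have a_gt1 : 1 < a by nra.
have E : (a - 1 / 2 - b) * (a - 1 / 2 + b) = 1 / 4.
  by transitivity (a ^+ 2 - a - b ^+ 2 + 1 / 4); [field | rewrite ab; field].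
have : 0 < a - 1 / 2 + b by lra.
nra.
Qed.

Section ThetaSequence.
Context {R : realType} {N : nat} {theta : nat -> R}.
Hypotheses (theta_N : theta N = 1)
  (theta_rec : forall k, (k < N)%N -> 0 < theta k /\ theta k ^+ 2 - theta k = theta k.+1 ^+ 2).

Lemma theta_gt0 {k} : (k <= N)%N -> 0 < theta k.
Proof.
rewrite leq_eqVlt => /orP [/eqP -> | /theta_rec [] //].
by rewrite theta_N.
Qed.

Lemma theta_ge {j} : (j <= N)%N -> (j%:R + 2) / 2 <= theta (N - j)%N.
Proof.
elim: j => [_|j IH j_lt]; first by rewrite subn0 theta_N add0r divff.
have lt : (N - j.+1 < N)%N by rewrite ltn_subrL (leq_ltn_trans _ j_lt).
have [pos rec] := theta_rec _ lt; rewrite subnSK // in rec.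
have := add_half_le_of_sqr_sub pos (theta_gt0 (leq_subr _ _)) rec.
by have := IH (ltnW j_lt); rewrite -[j.+1]addn1 natrD; lra.
Qed.

End ThetaSequence.

Theorem theorem1 (R : realType) (d : nat) (f : 'rV[R]_d -> R)
  (g : 'rV[R]_d -> 'rV[R]_d) (L : R) (xstar x0 : 'rV[R]_d) (Delta0 : R)
  (N : nat) (theta : nat -> R) (v x : nat -> 'rV[R]_d) :
  0 < L ->
  convex_fun f ->
  is_gradient f g ->
  L_smooth L g ->
  (forall y, f xstar <= f y) ->
  f x0 - f xstar <= Delta0 ->
  (1 <= N)%N ->
  theta N = 1 ->
  (forall k, (k < N)%N -> 0 < theta k /\ theta k ^+ 2 - theta k = theta k.+1 ^+ 2) ->
  v 0%N = 0 ->
  x 0%N = x0 ->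
  (forall k, (k < N)%N ->
     v k.+1 = v k + (L * theta k * theta k.+1 ^+ 2)^-1 *: g (x k)) ->
  (forall k, (k < N)%N ->
     x k.+1 = x k - L^-1 *: g (x k)
              - (2 * theta k.+1 ^+ 3 - theta k.+1 ^+ 2) *: v k.+1) ->
  enorm (g (x N)) ^+ 2 <= 8 * L * Delta0 / (N%:R + 2) ^+ 2.
Proof.
(* The bound also holds for [N = 0]. *)
move=> L_gt0 convex_f grad_g smooth_g xstar_min gap0 _ theta_N theta_rec v0 x0E vE xE.
pose P m := potential L (theta m) (f (x m)) (f (x N)) (x N - x m) (v m) (g (x m)) (g (x N)).
have P0_ge0 : 0 <= P 0%N.
  have <- : P N = 0 by rewrite /P theta_N subrr potential_final.
  apply: nonincr_upto => m m_lt; have [t_gt0 rec] := theta_rec m m_lt.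
  apply: (potential_le_step L_gt0 grad_g smooth_g convex_f t_gt0 _ rec (vE m m_lt) (xE m m_lt)).
  exact: (theta_gt0 theta_N theta_rec m_lt).
have T_gt0 := theta_gt0 theta_N theta_rec (leq0n N).
have := theta_ge theta_N theta_rec (leqnn N); rewrite subnn => T_ge.
move: P0_ge0; rewrite /P v0 x0E potential_initial ?gt_eqF //.
rewrite pmulr_lge0 ?invr_gt0 ?mulr_gt0 ?exprn_gt0 // => P0_ge0.
have := grad_sqr_le_gap L_gt0 grad_g smooth_g xstar x0 xstar_min.
have := grad_sqr_le_gap L_gt0 grad_g smooth_g xstar (x N) xstar_min.
have := ler_wpM2l (ltW L_gt0) gap0.
set T := theta 0%N in T_gt0 T_ge P0_ge0 *.
set hN := dotv (g (x N)) (g (x N)) in P0_ge0 *.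
move=> gapL hN_le h0_le; have hN_T : T ^+ 2 * hN <= 2 * L * Delta0 by lra.
have N2_gt0 : 0 < N%:R + 2 :> R by rewrite ltr_wpDl.
have N2_le : (N%:R + 2) ^+ 2 <= (2 * T) ^+ 2.
  by rewrite ler_pXn2r ?nnegrE ?(ltW N2_gt0) ?mulr_ge0 ?(ltW T_gt0) //; lra.
have hN_ge0 : 0 <= hN := dotvv_ge0 _.
rewrite sqr_enorm -/hN ler_pdivlMr ?exprn_gt0 //; nra.
Qed.
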